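(* Let $Q$ be a finite connected quandle that is isomorphic to a generalized Alexander quandle $\mathrm{GAlex}(G_0,f)$ for some finite group $G_0$ and $f\in\mathrm{Aut}(G_0)$. Let $e\in Q$, $G=\mathrm{Inn}(Q)$, $x=R_e$, $G'$ the derived subgroup of $G$ and $C(x)$ the centralizer of $x$ in $G$. Then the map $\pi_e:C(x)\cap G'\to\mathrm{inn}^{-1}(R_e)$, $\pi_e(g)=eg$, is a bijection. Hence $\pi_e$ induces a $\mathbb{Z}$-module isomorphism $(\pi_e)_*:\mathbb{Z}[C(x)\cap G']\to\mathbb{Z}[\mathrm{inn}^{-1}(R_e)]$, $\sum n_g g\mapsto\sum n_g\pi_e(g)$.
   Context: A quandle is a set with operation $*$ satisfying $a*a=a$; unique right division; $(a*b)*c=(a*c)*(b*c)$. $R_a(y)=y*a$; $\mathrm{Inn}(Q)$ is the permutation group generated by the $R_a$, acting on $Q$ on the right: $ag$ denotes the image of $a$ under $g$; connected means this action is transitive; $\mathrm{inn}(a)=R_a$. For a group $H$ and $f\in\mathrm{Aut}(H)$, $\mathrm{GAlex}(H,f)$ is the quandle on $H$ with $a*b=f(ab^{-1})b$. $\mathbb{Z}[S]$ denotes the free $\mathbb{Z}$-module with basis $S$. *)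

From mathcomp Require Import all_boot all_order all_algebra all_fingroup.
Set Implicit Arguments. Unset Strict Implicit. Unset Printing Implicit Defensive.

Record quandle (T : finType) := Quandle {
  qop : T -> T -> T;
  qop_idem : forall a, qop a a = a;
  qop_rdiv : forall a, bijective (fun y => qop y a);
  qop_distr : forall a b c, qop (qop a b) c = qop (qop a c) (qop b c)
}.

(* R_a as a permutation of T.  Mathcomp permutations compose as a right
   action: (s * t) x = t (s x), matching the right action of Inn(Q). *)
Definition Rq (T : finType) (Q : quandle T) (a : T) : {perm T} :=
  perm (bij_inj (qop_rdiv Q a)).

Definition Inn (T : finType) (Q : quandle T) : {group {perm T}} :=
  <<[set Rq Q a | a : T]>>%G.

Definition connected_quandle (T : finType) (Q : quandle T) : Prop :=
  [transitive Inn Q, on [set: T] | 'P].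

Definition inn_inv (T : finType) (Q : quandle T) (e : T) : {set T} :=
  [set a | Rq Q a == Rq Q e].

Definition galex_iso (T : finType) (Q : quandle T) (gT0 : finGroupType)
  (f : {perm gT0}) (phi : T -> gT0) : Prop :=
  bijective phi /\
  forall a b, phi (qop Q a b) = (f (phi a * (phi b)^-1) * phi b)%g.

(* Z[A] for a subset A of a finite type U: integer-valued functions on U
   supported in A (the free Z-module with basis A). *)
Definition zfree (U : finType) (A : {set U}) : pred {ffun U -> int} :=
  fun c => [forall x, (x \notin A) ==> (c x == 0)].

Definition zpush (U V : finType) (A : {set U}) (p : U -> V)
  (c : {ffun U -> int}) : {ffun V -> int} :=
  [ffun y => (\sum_(x in A | p x == y) c x)%R].

From mathcomp Require Import all_boot all_order all_algebra all_fingroup.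
From mathcomp Require Import commutator.
Set Implicit Arguments. Unset Strict Implicit. Unset Printing Implicit Defensive.

(* Q ≅ GAlex(G0, f) makes every R_b an affine map y |-> f(y) * u of G0, so
   Inn(Q) consists of affine maps with linear part in the abelian group <f>.
   Commutators of such maps are translations, hence the derived group G' acts
   freely on Q, which gives injectivity of pi_e.  By connectedness every R_b
   is a conjugate R_e^g = R_e [R_e, g], so Inn(Q) = <R_e> G'; since R_e fixes
   e, G' is already transitive.  Finally R_{e g} = R_e^g, so e g lies in
   inn^{-1}(R_e) exactly when g centralizes R_e. *)

Section FreeModuleBijection.

Variables (U V : finType) (A : {set U}) (B : {set V}) (p : U -> V).
Hypotheses (p_inj : {in A &, injective p}) (p_im : [set p g | g in A] = B).

Lemma zpush_fiber (F : U -> int) s : s \in A ->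
  (\sum_(x in A | p x == p s) F x)%R = F s.
Proof.
move=> sA; apply: big_pred1 => x /=.
apply/andP/eqP => [[xA /eqP]|->]; first exact: p_inj.
by rewrite sA.
Qed.

Lemma zpush_empty_fiber (F : U -> int) y : y \notin B ->
  (\sum_(x in A | p x == y) F x)%R = 0%R.
Proof.
move=> yB; apply: big_pred0 => x; apply/negbTE/andP => -[xA /eqP pxy].
by move: yB; rewrite -p_im -pxy imset_f.
Qed.

Lemma zpushD : {morph zpush A p : c d / (c + d)%R}.
Proof.
move=> c d; apply/ffunP => y; rewrite !ffunE -big_split.
by apply: eq_bigr => z _; rewrite ffunE.
Qed.

Lemma zpush_zfree c : zpush A p c \in zfree B.
Proof.
rewrite unfold_in; apply/forallP => y; apply/implyP => yB.
by rewrite ffunE zpush_empty_fiber.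
Qed.

Lemma zpush_inj : {in zfree A &, injective (zpush A p)}.
Proof.
move=> c d; rewrite !unfold_in => /forallP cA /forallP dA cd; apply/ffunP => s.
have [sA | sNA] := boolP (s \in A).
  by have := congr1 (fun h : {ffun V -> int} => h (p s)) cd; rewrite /= !ffunE !zpush_fiber.
by rewrite (eqP (implyP (cA s) sNA)) (eqP (implyP (dA s) sNA)).
Qed.

Lemma zpush_surj d : d \in zfree B -> exists2 c, c \in zfree A & zpush A p c = d.
Proof.
rewrite unfold_in => /forallP dB.
exists [ffun g => if g \in A then d (p g) else 0%R].
  by rewrite unfold_in; apply/forallP => g; apply/implyP => gA; rewrite ffunE (negbTE gA).
apply/ffunP => y; rewrite ffunE.
have [yB | yNB] := boolP (y \in B).
  by move: (yB); rewrite -p_im => /imsetP [s sA ->]; rewrite zpush_fiber // ffunE sA.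
by rewrite zpush_empty_fiber // (eqP (implyP (dB y) yNB)).
Qed.

End FreeModuleBijection.

Local Open Scope group_scope.

Lemma Aut_setT_morphM (gT : finGroupType) (a : {perm gT}) :
  a \in Aut [set: gT] -> {morph a : u v / u * v}.
Proof. by move=> /Aut_morphic/morphicP aM u v; apply: aM; rewrite inE. Qed.

Lemma astab1_trivial_inj (T : finType) (D : {group {perm T}}) (e : T) :
  'C_D[e | 'P] = 1 -> {in D &, injective (fun g : {perm T} => g e)}.
Proof.
move=> De g h gD hD /= ghe; apply/eqP; rewrite eq_mulgV1; apply/eqP/set1gP.
rewrite -De inE groupM ?groupV //=; apply/astab1P.
by rewrite /= apermE permM ghe -permM mulgV perm1.
Qed.

Section AffineMaps.

Variables (T : finType) (gT : finGroupType) (phi : T -> gT).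
Implicit Types (a b : {perm gT}) (g h : {perm T}).

Definition affine_by (a : {perm gT}) (g : {perm T}) : bool :=
  [exists u, [forall y, phi (g y) == a (phi y) * u]].

Lemma affine_byP a g :
  reflect (exists u, forall y, phi (g y) = a (phi y) * u) (affine_by a g).
Proof.
apply: (iffP existsP) => -[u Hu]; exists u.
  by move=> y; apply/eqP/(forallP Hu).
by apply/forallP => y; rewrite Hu.
Qed.

Lemma affine_by1 : affine_by 1 1.
Proof. by apply/affine_byP; exists 1 => y; rewrite !perm1 mulg1. Qed.

Lemma affine_byM a b g h : b \in Aut [set: gT] ->
  affine_by a g -> affine_by b h -> affine_by (a * b) (g * h).
Proof.
move=> /Aut_setT_morphM bM /affine_byP[u Hg] /affine_byP[v Hh].
by apply/affine_byP; exists (b u * v) => y; rewrite !permM Hh Hg bM mulgA.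
Qed.

Lemma affine_byV a g : a \in Aut [set: gT] -> affine_by a g -> affine_by a^-1 g^-1.
Proof.
move=> aAut /affine_byP[u Hg]; apply/affine_byP.
exists (a^-1 u^-1) => y.
rewrite -(Aut_setT_morphM (groupVr aAut)) -(permK a (phi (g^-1 y))).
by congr (a^-1 _); apply: (mulIg u); rewrite -Hg -permM mulVg perm1 mulgKV.
Qed.

Lemma affine_byR a b g h : a \in Aut [set: gT] -> b \in Aut [set: gT] ->
  affine_by a g -> affine_by b h -> affine_by [~ a, b] [~ g, h].
Proof.
move=> aAut bAut ag bh; rewrite /commg /conjg !mulgA.
have aVAut := groupVr aAut; have bVAut := groupVr bAut.
by do 3![apply: affine_byM => //]; apply: affine_byV.
Qed.

Definition Aff (A : {set {perm gT}}) : {set {perm T}} :=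
  [set g | [exists a in A :&: Aut [set: gT], affine_by a g]].

Lemma AffP (A : {set {perm gT}}) g :
  reflect (exists2 a, a \in A :&: Aut [set: gT] & affine_by a g) (g \in Aff A).
Proof. by rewrite inE; apply: (iffP exists_inP). Qed.

Lemma group_set_Aff (A : {group {perm gT}}) : group_set (Aff A).
Proof.
apply/group_setP; split; first by apply/AffP; exists 1; rewrite ?group1 ?affine_by1.
move=> g h /AffP[a aA ag] /AffP[b bA bh]; apply/AffP; exists (a * b).
  exact: groupM.
by apply: affine_byM => //; case/setIP: bA.
Qed.

Canonical Aff_group (A : {group {perm gT}}) := Group (group_set_Aff A).

Lemma der_Aff (A : {group {perm gT}}) : [~: Aff A, Aff A] \subset Aff [~: A, A].
Proof.
rewrite gen_subG; apply/subsetP => _ /imset2P[g h /AffP[a aA ag] /AffP[b bA bh] ->].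
have /setIP[aA' aAut] := aA; have /setIP[bA' bAut] := bA.
apply/AffP; exists [~ a, b]; last exact: affine_byR.
by rewrite inE mem_commg ?groupR.
Qed.

Lemma astab1_Aff1 (e : T) : injective phi -> 'C_(Aff 1)[e | 'P] = 1.
Proof.
move=> phi_inj; apply/trivgP/subsetP => g /setIP[/AffP[a /setIP[/set1P -> _]]].
move=> /affine_byP[u Hg] /astab1P ge; rewrite inE; apply/eqP/permP => y.
have u1 : u = 1 by apply: (mulgI (phi e)); rewrite mulg1 -[in RHS](ge : g e = e) Hg perm1.
by apply: phi_inj; rewrite Hg u1 !perm1 mulg1.
Qed.

End AffineMaps.

Section QuandleAutomorphisms.

Variables (T : finType) (Q : quandle T).

Lemma RqE a y : Rq Q a y = qop Q y a.
Proof. by rewrite permE. Qed.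

Lemma Rq_in_Inn a : Rq Q a \in Inn Q.
Proof. by apply: mem_gen; apply: imset_f. Qed.

Definition Autq : {set {perm T}} :=
  [set g : {perm T} | [forall a, [forall b, g (qop Q a b) == qop Q (g a) (g b)]]].

Lemma AutqP (g : {perm T}) :
  reflect (forall a b, g (qop Q a b) = qop Q (g a) (g b)) (g \in Autq).
Proof.
rewrite inE; apply: (iffP forallP) => [gM a b | gM a].
  exact/eqP/(forallP (gM a)).
by apply/forallP => b; rewrite gM.
Qed.

Lemma group_set_Autq : group_set Autq.
Proof.
apply/group_setP; split; first by apply/AutqP => a b; rewrite !perm1.
by move=> g h /AutqP gM /AutqP hM; apply/AutqP => a b; rewrite !permM gM hM.
Qed.

Canonical Autq_group := Group group_set_Autq.

Lemma Inn_sub_Autq : Inn Q \subset Autq.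
Proof.
rewrite gen_subG; apply/subsetP => _ /imsetP[c _ ->].
by apply/AutqP => a b; rewrite !RqE qop_distr.
Qed.

Lemma Rq_conj (g : {perm T}) a : g \in Autq -> Rq Q (g a) = Rq Q a ^ g.
Proof.
move=> /AutqP gM; apply/permP => y.
by rewrite conjgE !permM !RqE gM permKV.
Qed.

Lemma Autq_cent1_Rq (g : {perm T}) a :
  g \in Autq -> (g \in 'C[Rq Q a]) = (Rq Q (g a) == Rq Q a).
Proof.
move=> gAut; rewrite Rq_conj //.
by apply/cent1P/eqP => [/esym/commgP/conjg_fixP | /conjg_fixP/commgP/esym].
Qed.

End QuandleAutomorphisms.

Section ConnectedQuandle.

Variables (T : finType) (Q : quandle T) (e : T).
Hypothesis Qconn : connected_quandle Q.

Lemma Inn_sub_cycle_der : Inn Q \subset <[Rq Q e]> * [~: Inn Q, Inn Q].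
Proof.
have nDx : <[Rq Q e]> \subset 'N([~: Inn Q, Inn Q]).
  by rewrite cycle_subG (subsetP (commg_norml _ _)) ?Rq_in_Inn.
rewrite -(norm_joinEl nDx) gen_subG; apply/subsetP => _ /imsetP[b _ ->].
have [g gInn ->] := atransP2 Qconn (in_setT e) (in_setT b).
rewrite /= Rq_conj ?(subsetP (Inn_sub_Autq Q)) // (norm_joinEl nDx).
rewrite -(mulKVg (Rq Q e) (Rq Q e ^ g)) -commgEl.
by rewrite mem_mulg ?cycle_id ?mem_commg ?Rq_in_Inn.
Qed.

Lemma der_Inn_reach a : exists2 d, d \in [~: Inn Q, Inn Q] & d e = a.
Proof.
have [g gInn ->] := atransP2 Qconn (in_setT e) (in_setT a).
have /mulsgP[k d kx dD ->] := subsetP Inn_sub_cycle_der g gInn.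
exists d => //.
have ke : k e = e.
  suff /astab1P : k \in 'C[e | 'P] by rewrite /= apermE.
  move: kx; apply/subsetP; rewrite cycle_subG.
  by apply/astab1P; rewrite /= apermE RqE qop_idem.
by rewrite /= apermE permM ke.
Qed.

End ConnectedQuandle.

Section GeneralizedAlexander.

Variables (T : finType) (Q : quandle T) (gT : finGroupType) (f : {perm gT}).
Variable phi : T -> gT.
Hypotheses (fAut : f \in Aut [set: gT]) (Qiso : galex_iso Q f phi).

Lemma Inn_sub_Aff : Inn Q \subset Aff phi <[f]>.
Proof.
rewrite gen_subG; apply/subsetP => _ /imsetP[b _ ->].
apply/AffP; exists f; first by rewrite inE cycle_id.
apply/affine_byP; exists (f (phi b)^-1 * phi b) => y.
by rewrite RqE Qiso.2 (Aut_setT_morphM fAut) mulgA.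
Qed.

Lemma astab1_der_Inn e : 'C_([~: Inn Q, Inn Q])[e | 'P] = 1.
Proof.
have [[phi' phiK _] _] := Qiso.
apply/trivgP; rewrite -(astab1_Aff1 e (can_inj phiK)) setSI //.
rewrite -(commG1P (cycle_abelian f)).
exact: subset_trans (commgSS Inn_sub_Aff Inn_sub_Aff) (der_Aff _ _).
Qed.

End GeneralizedAlexander.

Theorem mainTheorem7 (T : finType) (Q : quandle T)
  (gT0 : finGroupType) (f : {perm gT0}) (phi : T -> gT0)
  (hf : f \in Aut [set: gT0])
  (hiso : galex_iso Q f phi)
  (hconn : connected_quandle Q)
  (e : T) :
  let G := Inn Q in
  let x := Rq Q e in
  let S := ('C_G[x] :&: [~: G, G])%g in
  let pi_e := fun g : {perm T} => g e in
  (* pi_e : C(x) ∩ G' -> inn^{-1}(R_e) is a bijection *)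
  ({in S &, injective pi_e} /\ [set pi_e g | g in S] = inn_inv Q e) /\
  (* the induced map Z[C(x) ∩ G'] -> Z[inn^{-1}(R_e)] is a Z-module isomorphism *)
  ({morph zpush S pi_e : c d / (c + d)%R} /\
   {in zfree S, forall c, zpush S pi_e c \in zfree (inn_inv Q e)} /\
   {in zfree S &, injective (zpush S pi_e)} /\
   {in zfree (inn_inv Q e), forall d, exists2 c, c \in zfree S & zpush S pi_e c = d}).
Proof.
move=> G x S pi_e.
have GAutq := subsetP (Inn_sub_Autq Q).
have DG : [~: G, G] \subset G by rewrite -derg1 der_sub.
have pi_inj : {in S &, injective pi_e}.
  move=> g h /setIP[_ gD] /setIP[_ hD].
  exact: astab1_trivial_inj (astab1_der_Inn hf hiso e) _ _ gD hD.
have pi_im : [set pi_e g | g in S] = inn_inv Q e.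
  apply/setP => a; rewrite inE; apply/imsetP/idP => [[g] | aI].
    by move=> /setIP[/setIP[gG gx] _] ->; rewrite /pi_e -Autq_cent1_Rq ?GAutq.
  have [d dD de] := der_Inn_reach e hconn a; exists d => //.
  have dG := subsetP DG d dD.
  by rewrite inE dD andbT inE dG Autq_cent1_Rq ?GAutq // de.
split; first by [].
split; first exact: zpushD.
split; first by move=> c _; exact: (zpush_zfree pi_im).
by split; [apply: zpush_inj pi_inj | apply: zpush_surj pi_inj pi_im].
Qed.
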